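(* Suppose assumptions (A1)–(A5) below hold. Then the feasible region of the maximum likelihood estimation problem $$\max_{(x_t,\theta_t,u_t)}\ \sum_{i=0}^{n_x}\log p_\nu(\tilde x_{t_i}-Dx_{t_i})+\sum_{j=0}^{n_u}\log p_\omega(\tilde y_{\tau_j}-Cu_{\tau_j})$$ subject to, for all $t$: $u_t\in\arg\max\{f(x_{t+1},u,\theta_t,\pi_t): x_{t+1}=h(x_t,u),\ u\in\mathcal U\}$, $x_{t+1}=h(x_t,u_t)$, $\theta_{t+1}=g(x_t,u_t,\theta_t,\pi_t)$, $x_t\in\mathcal X$, $\theta_t\in\Theta$, can be formulated as a set of mixed integer linear constraints with respect to $(x_t,u_t,\theta_t,\pi_t)$ (possibly with additional auxiliary variables).
   Context: Model. Let $\mathcal X,\mathcal U,\Pi,\Theta$ be compact finite-dimensional sets with $\mathcal X,\mathcal U,\Theta$ convex. At each discrete time $t$ an agent has system state $x_t\in\mathcal X$, motivational state $\theta_t\in\Theta$, decision $u_t\in\mathcal U$; a coordinator applies incentive $\pi_t\in\Pi$. Decisions and states obey the constraints displayed in the claim. Observations: $\tilde x_{t_i}=Dx_{t_i}+\nu_{t_i}$ ($i=0,\dots,n_x$), $\tilde y_{\tau_i}=Cu_{\tau_i}+\omega_{\tau_i}$ ($i=0,\dots,n_u$), $C,D$ known matrices, $p_\nu,p_\omega$ the noise densities. $(a;b)$ denotes vertical concatenation. Assumptions: (A1) $\mathcal X,\mathcal U,\Pi,\Theta$ bounded finite-dimensional; $\mathcal X,\mathcal U,\Theta$ convex polyhedra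 described by finitely many linear inequalities; $\Pi$ described by finitely many mixed integer linear constraints. (A2) $f:\mathcal X\times\mathcal U\times\Theta\times\Pi\to\mathbb R$ deterministic, concave in $x$, strictly concave in $u$, concave in $\theta$, and $f(x,u,\theta,\pi)=-(x;u)^TQ(x;u)+(\theta;\pi)^TH(x;u)+\sum_{i=1}^K\min_{j\in J_i}\{F_{i,j}(x;u;\theta;\pi)+\zeta_{i,j}\}$ with $Q$ positive semidefinite, matrices $H,F_{i,j}$, scalars $\zeta_{i,j}$, finite index sets $J_i$. (A3) $h,g$ deterministic surjective with $h(x,u)=Ax+Bu+k$ and $g(x,u,\theta,\pi)=G_i(x;u;\theta;\pi)+\chi_i$ whenever $B_i(x;u;\theta;\pi)\le\psi_i$ (finitely many $i$; matrices $A,B,G_i,B_i$; constants $k,\psi_i,\chi_i$), the polytopes $\{B_i(x;u;\theta;\pi)\le\psi_i\}$ having disjoint interiors. (A4) The noises $\{\nu_{t_i}\},\{\omega_{\tau_i}\}$ are i.i.d. sequences of random vectors with i.i.d. components, zero mean and known finite variance, and $\log p_\nu,\log p_\omega$ are expressible using integer linear constraints. (A5) Observability: there exist $T$ and an incentive sequence such that the initial condition $(x_0,\theta_0)$ can be computed exactly from noiseless measurements on $0\le t\le T$. *)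

From HB Require Import structures.
From mathcomp Require Import all_boot all_order all_algebra.
From mathcomp Require Import reals.
Set Implicit Arguments. Unset Strict Implicit. Unset Printing Implicit Defensive.
Import Order.TTheory GRing.Theory Num.Theory.
Local Open Scope ring_scope.

Section Defs.
Variable R : realType.

Definition mxle m n (A B : 'M[R]_(m, n)) := forall i j, A i j <= B i j.

Definition polyhedron n (S : 'cV[R]_n -> Prop) :=
  exists k (M : 'M[R]_(k, n)) (b : 'cV[R]_k), forall v, S v <-> mxle (M *m v) b.

Definition bounded_set n (S : 'cV[R]_n -> Prop) :=
  exists c : R, forall v, S v -> forall i, `|v i 0| <= c.

Definition closed_set n (S : 'cV[R]_n -> Prop) :=
  forall v : 'cV[R]_n, (forall e : R, 0 < e -> exists w, S w /\ forall i, `|w i 0 - v i 0| < e) -> S v.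

Definition interior_pt n (S : 'cV[R]_n -> Prop) (v : 'cV[R]_n) :=
  exists e : R, 0 < e /\ forall w : 'cV[R]_n, (forall i, `|w i 0 - v i 0| < e) -> S w.

Definition intvec p (z : 'cV[int]_p) : 'cV[R]_p := map_mx (fun k : int => k%:~R) z.

Definition milp_set n (S : 'cV[R]_n -> Prop) :=
  exists k mw mz (A : 'M[R]_(k, n)) (Bw : 'M[R]_(k, mw)) (Bz : 'M[R]_(k, mz)) (b : 'cV[R]_k),
    forall v, S v <-> exists w z, mxle (A *m v + Bw *m w + Bz *m intvec z) b.

Definition psd n (Q : 'M[R]_n) := forall v : 'cV[R]_n, 0 <= (v^T *m Q *m v) 0 0.

Definition concave_on n (S : 'cV[R]_n -> Prop) (phi : 'cV[R]_n -> R) :=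
  forall a b l, S a -> S b -> 0 <= l <= 1 ->
    l * phi a + (1 - l) * phi b <= phi (l *: a + (1 - l) *: b).

Definition strictly_concave_on n (S : 'cV[R]_n -> Prop) (phi : 'cV[R]_n -> R) :=
  forall a b l, S a -> S b -> a <> b -> 0 < l < 1 ->
    l * phi a + (1 - l) * phi b < phi (l *: a + (1 - l) *: b).

Variables nx nu nth npi : nat.
Notation X_t := 'cV[R]_nx.
Notation U_t := 'cV[R]_nu.
Notation Th_t := 'cV[R]_nth.
Notation Pi_t := 'cV[R]_npi.

Definition f_form (f : X_t -> U_t -> Th_t -> Pi_t -> R) :=
  exists (Q : 'M[R]_(nx + nu)) (H : 'M[R]_(nth + npi, nx + nu)) (K : nat)
         (Js : 'I_K -> nat)
         (F : forall i : 'I_K, 'I_(Js i).+1 -> 'rV[R]_((nx + nu) + (nth + npi)))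
         (zeta : forall i : 'I_K, 'I_(Js i).+1 -> R),
    psd Q /\
    forall x u th pi,
      f x u th pi =
        - ((col_mx x u)^T *m Q *m col_mx x u) 0 0
        + ((col_mx th pi)^T *m H *m col_mx x u) 0 0
        + \sum_(i < K)
            (let e := fun j : 'I_(Js i).+1 =>
                 (F i j *m col_mx (col_mx x u) (col_mx th pi)) 0 0 + zeta i j in
             \big[Num.min/e ord0]_(j < (Js i).+1) e j).

Definition h_affine (h : X_t -> U_t -> X_t) :=
  exists (A : 'M[R]_nx) (B : 'M[R]_(nx, nu)) (k : X_t),
    forall x u, h x u = A *m x + B *m u + k.

Definition g_pwa (X : X_t -> Prop) (U : U_t -> Prop) (Th : Th_t -> Prop) (Pi : Pi_t -> Prop)
    (g : X_t -> U_t -> Th_t -> Pi_t -> Th_t) :=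
  exists (P : nat) (mB : 'I_P -> nat)
         (Bp : forall i : 'I_P, 'M[R]_(mB i, (nx + nu) + (nth + npi)))
         (psi : forall i : 'I_P, 'cV[R]_(mB i))
         (G : 'I_P -> 'M[R]_(nth, (nx + nu) + (nth + npi)))
         (chi : 'I_P -> Th_t),
    let piece i := fun v => mxle (Bp i *m v) (psi i) in
    (forall i x u th pi,
        piece i (col_mx (col_mx x u) (col_mx th pi)) ->
        g x u th pi = G i *m col_mx (col_mx x u) (col_mx th pi) + chi i) /\
    (forall i j v, i <> j -> interior_pt (piece i) v -> interior_pt (piece j) v -> False) /\
    (forall x u th pi, X x -> U u -> Th th -> Pi pi ->
        exists i, piece i (col_mx (col_mx x u) (col_mx th pi))).

Definition argmax_u (U : U_t -> Prop) (f : X_t -> U_t -> Th_t -> Pi_t -> R)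
    (h : X_t -> U_t -> X_t) (x : X_t) (th : Th_t) (pi : Pi_t) (u : U_t) :=
  U u /\ forall u', U u' -> f (h x u') u' th pi <= f (h x u) u th pi.

Definition feasible (X : X_t -> Prop) (U : U_t -> Prop) (Th : Th_t -> Prop) (Pi : Pi_t -> Prop)
    (f : X_t -> U_t -> Th_t -> Pi_t -> R) (h : X_t -> U_t -> X_t)
    (g : X_t -> U_t -> Th_t -> Pi_t -> Th_t) (N : nat)
    (x : nat -> X_t) (u : nat -> U_t) (th : nat -> Th_t) (pi : nat -> Pi_t) :=
  forall t, (t <= N)%N ->
    [/\ argmax_u U f h (x t) (th t) (pi t) (u t), X (x t), Th (th t), Pi (pi t) &
        ((t < N)%N -> x t.+1 = h (x t) (u t) /\ th t.+1 = g (x t) (u t) (th t) (pi t))].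

Definition milp_traj (N : nat)
    (S : (nat -> X_t) -> (nat -> U_t) -> (nat -> Th_t) -> (nat -> Pi_t) -> Prop) :=
  exists k mw mz (Ax : nat -> 'M[R]_(k, nx)) (Au : nat -> 'M[R]_(k, nu))
         (Ath : nat -> 'M[R]_(k, nth)) (Api : nat -> 'M[R]_(k, npi))
         (Bw : 'M[R]_(k, mw)) (Bz : 'M[R]_(k, mz)) (b : 'cV[R]_k),
    forall x u th pi,
      S x u th pi <->
      exists (w : 'cV[R]_mw) (z : 'cV[int]_mz),
        mxle (\sum_(t < N.+1) (Ax t *m x t + Au t *m u t + Ath t *m th t + Api t *m pi t)
              + Bw *m w + Bz *m intvec z) b.

Definition observable (X : X_t -> Prop) (U : U_t -> Prop) (Th : Th_t -> Prop) (Pi : Pi_t -> Prop)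
    (f : X_t -> U_t -> Th_t -> Pi_t -> R) (h : X_t -> U_t -> X_t)
    (g : X_t -> U_t -> Th_t -> Pi_t -> Th_t)
    pd pc (D : 'M[R]_(pd, nx)) (C : 'M[R]_(pc, nu))
    nmx nmu (tm : 'I_nmx.+1 -> nat) (tau : 'I_nmu.+1 -> nat) :=
  exists (T : nat) (pis : nat -> Pi_t),
    (forall t, (t <= T)%N -> Pi (pis t)) /\
    forall x u th x' u' th',
      feasible X U Th Pi f h g T x u th pis ->
      feasible X U Th Pi f h g T x' u' th' pis ->
      (forall i, (tm i <= T)%N -> D *m x (tm i) = D *m x' (tm i)) ->
      (forall i, (tau i <= T)%N -> C *m u (tau i) = C *m u' (tau i)) ->
      x 0%N = x' 0%N /\ th 0%N = th' 0%N.

End Defs.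

From HB Require Import structures.
From mathcomp Require Import all_boot all_order all_algebra.
From mathcomp Require Import reals.
From mathcomp Require Import ring lra zify.
From Stdlib Require Import Classical FunctionalExtensionality.
Import Order.TTheory GRing.Theory Num.Theory.
Local Open Scope ring_scope.

Set Implicit Arguments. Unset Strict Implicit. Unset Printing Implicit Defensive.

(* Once x_(t+1) = h x_t u is substituted, the decision u_t maximizes over the
   polyhedron U a concave function  - u^T Q u + a u + sum_i min_j (r_ij u + c_ij)
   whose coefficients a and c_ij depend affinely on (x_t, theta_t, pi_t).  By
   Farkas' lemma its maximizers are characterised by KKT conditions, and once the
   active constraints and the minimising pieces are fixed these conditions are
   linear in the stage variables and the multipliers.  The stage variables range
   over a bounded set, so the finite disjunction over active sets, like the
   disjunction over the affine pieces of g, is expressed with binary variables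
   and big-M constants.  Intersecting over t <= N and stacking the stages into
   one vector gives the mixed integer linear description. *)

Section EntryArith.
Variable R : pzRingType.

Lemma mxDE m n (A B : 'M[R]_(m, n)) i j : (A + B) i j = A i j + B i j.
Proof. by rewrite mxE. Qed.

Lemma mxNE m n (A : 'M[R]_(m, n)) i j : (- A) i j = - A i j.
Proof. by rewrite mxE. Qed.

Lemma mxBE m n (A B : 'M[R]_(m, n)) i j : (A - B) i j = A i j - B i j.
Proof. by rewrite !mxE. Qed.

Lemma mxZE m n k (A : 'M[R]_(m, n)) i j : (k *: A) i j = k * A i j.
Proof. by rewrite mxE. Qed.

End EntryArith.

Section MilpCalculus.
Variable R : realType.

Definition cube n (c : R) (v : 'cV[R]_n) := forall i, `|v i 0| <= c.

Definition affine n m (F : 'cV[R]_n -> 'cV[R]_m) :=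
  exists (M : 'M[R]_(m, n)) c, forall v, F v = M *m v + c.

Definition affine_fun n (phi : 'cV[R]_n -> R) :=
  exists (r : 'rV[R]_n) c, forall v, phi v = (r *m v) 0 0 + c.

Lemma mxle_col m1 m2 n (A1 B1 : 'M[R]_(m1, n)) (A2 B2 : 'M[R]_(m2, n)) :
  mxle (col_mx A1 A2) (col_mx B1 B2) <-> mxle A1 B1 /\ mxle A2 B2.
Proof.
split=> [h | [h1 h2] i j].
  by split=> i j; [have := h (lshift m2 i) j | have := h (rshift m1 i) j];
    rewrite ?col_mxEu ?col_mxEd.
by case: (split_ordP i) => k ->; rewrite ?col_mxEu ?col_mxEd.
Qed.

Lemma mxleBrDr m n (A B C : 'M[R]_(m, n)) : mxle A (B - C) <-> mxle (A + C) B.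
Proof. by split=> h i j; have := h i j; rewrite !mxE lerBrDr. Qed.

Lemma mxle11 (A B : 'M[R]_1) : mxle A B <-> A 0 0 <= B 0 0.
Proof. by split=> [|h i j]; [apply | rewrite !ord1]. Qed.

Lemma affine_id n : affine (@id 'cV[R]_n).
Proof. by exists 1%:M, 0 => v; rewrite mul1mx addr0. Qed.

Lemma affine_cst n m (c : 'cV[R]_m) : affine (fun _ : 'cV[R]_n => c).
Proof. by exists 0, c => v; rewrite mul0mx add0r. Qed.

Lemma affineD n m (F G : 'cV[R]_n -> 'cV[R]_m) :
  affine F -> affine G -> affine (fun v => F v + G v).
Proof.
move=> [M [c hF]] [M' [c' hG]]; exists (M + M'), (c + c') => v.
by rewrite hF hG mulmxDl addrACA.
Qed.

Lemma affineMl n m p (M : 'M[R]_(p, m)) (F : 'cV[R]_n -> 'cV[R]_m) :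
  affine F -> affine (fun v => M *m F v).
Proof.
by move=> [M' [c hF]]; exists (M *m M'), (M *m c) => v; rewrite hF mulmxDr mulmxA.
Qed.

Lemma affineN n m (F : 'cV[R]_n -> 'cV[R]_m) : affine F -> affine (fun v => - F v).
Proof.
move=> /(affineMl (- 1%:M)) [M [c hF]]; exists M, c => v.
by rewrite -hF mulNmx mul1mx.
Qed.

Lemma affine_col n m1 m2 (F : 'cV[R]_n -> 'cV[R]_m1) (G : 'cV[R]_n -> 'cV[R]_m2) :
  affine F -> affine G -> affine (fun v => col_mx (F v) (G v)).
Proof.
move=> [M [c hF]] [M' [c' hG]]; exists (col_mx M M'), (col_mx c c') => v.
by rewrite hF hG mul_col_mx add_col_mx.
Qed.

Lemma affine_usub n m1 m2 (F : 'cV[R]_n -> 'cV[R]_(m1 + m2)) :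
  affine F -> affine (fun v => usubmx (F v)).
Proof.
by move=> [M [c hF]]; exists (usubmx M), (usubmx c) => v; rewrite hF linearD mul_usub_mx.
Qed.

Lemma affine_dsub n m1 m2 (F : 'cV[R]_n -> 'cV[R]_(m1 + m2)) :
  affine F -> affine (fun v => dsubmx (F v)).
Proof.
by move=> [M [c hF]]; exists (dsubmx M), (dsubmx c) => v; rewrite hF linearD mul_dsub_mx.
Qed.

Lemma affine_rowsub n m p (f : 'I_p -> 'I_m) (F : 'cV[R]_n -> 'cV[R]_m) :
  affine F -> affine (fun v => rowsub f (F v)).
Proof.
move=> /(affineMl (rowsub f 1%:M)) [M [c hF]].
by exists M, c => v; rewrite rowsubE hF.
Qed.

Lemma affine_comp n m p (F : 'cV[R]_m -> 'cV[R]_p) (G : 'cV[R]_n -> 'cV[R]_m) :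
  affine F -> affine G -> affine (fun v => F (G v)).
Proof.
move=> [M [c hF]] [M' [c' hG]]; exists (M *m M'), (M *m c' + c) => v.
by rewrite hF hG mulmxDr mulmxA addrA.
Qed.

Lemma affine_fun_ext n (phi psi : 'cV[R]_n -> R) :
  affine_fun phi -> (forall v, phi v = psi v) -> affine_fun psi.
Proof. by move=> [r [c h]] e; exists r, c => v; rewrite -e. Qed.

Lemma affine_entry n m (F : 'cV[R]_n -> 'cV[R]_m) i :
  affine F -> affine_fun (fun v => F v i 0).
Proof.
move=> [M [c hF]]; exists (row i M), (c i 0) => v.
by rewrite hF -row_mul mxE [in RHS]mxE.
Qed.

Lemma affine_fun_comp n m (phi : 'cV[R]_m -> R) (F : 'cV[R]_n -> 'cV[R]_m) :
  affine_fun phi -> affine F -> affine_fun (fun v => phi (F v)).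
Proof.
move=> [r [c hphi]] [M [c' hF]]; exists (r *m M), ((r *m c') 0 0 + c) => v.
by rewrite hphi hF mulmxDr mulmxA mxDE addrA.
Qed.

Lemma affine_fun_cst n (c : R) : affine_fun (fun _ : 'cV[R]_n => c).
Proof. by exists 0, c => v; rewrite mul0mx mxE add0r. Qed.

Lemma affine_funD n (phi psi : 'cV[R]_n -> R) :
  affine_fun phi -> affine_fun psi -> affine_fun (fun v => phi v + psi v).
Proof.
move=> [r [c hphi]] [r' [c' hpsi]]; exists (r + r'), (c + c') => v.
by rewrite hphi hpsi mulmxDl !mxE addrACA.
Qed.

Lemma affine_funZ n k (phi : 'cV[R]_n -> R) :
  affine_fun phi -> affine_fun (fun v => k * phi v).
Proof.
move=> [r [c hphi]]; exists (k *: r), (k * c) => v.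
by rewrite hphi -scalemxAl !mxE mulrDr.
Qed.

Lemma affine_fun_sum n (I : Type) (s : seq I) (P : pred I) (phi : I -> 'cV[R]_n -> R) :
  (forall i, affine_fun (phi i)) -> affine_fun (fun v => \sum_(i <- s | P i) phi i v).
Proof.
move=> hphi; elim: s => [|i s IH].
  by have [r [c h]] := affine_fun_cst n 0; exists r, c => v; rewrite big_nil -h.
have [r [c h]] := affine_funD (hphi i) IH.
have [r' [c' h']] := IH.
case Pi: (P i).
  by exists r, c => v; rewrite big_cons Pi -h.
by exists r', c' => v; rewrite big_cons Pi -h'.
Qed.

Lemma milp_set_ext n (S T : 'cV[R]_n -> Prop) :
  milp_set S -> (forall v, S v <-> T v) -> milp_set T.
Proof.
by move=> [k [p [q [A [B [C [b hS]]]]]]] hST; exists k, p, q, A, B, C, b => v; rewrite -hST.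
Qed.

Lemma milp_polyhedron n (S : 'cV[R]_n -> Prop) : polyhedron S -> milp_set S.
Proof.
move=> [k [M [b hS]]]; exists k, 0%N, 0%N, M, 0, 0, b => v.
rewrite hS; split=> [h | [w [z]]]; last by rewrite !mul0mx !addr0.
by exists 0, 0; rewrite !mul0mx !addr0.
Qed.

Lemma milp_setT n : milp_set (fun _ : 'cV[R]_n => True).
Proof.
by apply: milp_polyhedron; exists 0%N, 0, 0 => v; split=> // _ [].
Qed.

Lemma milp_set_le n (phi psi : 'cV[R]_n -> R) :
  affine_fun phi -> affine_fun psi -> milp_set (fun v => phi v <= psi v).
Proof.
move=> [r [c hphi]] [r' [c' hpsi]]; apply: milp_polyhedron.
exists 1%N, (r - r'), (c' - c)%:M => v.
rewrite mxle11 hphi hpsi mulmxBl !mxE eqxx mulr1n.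
by split=> h; lra.
Qed.

Lemma milp_setI n (S T : 'cV[R]_n -> Prop) :
  milp_set S -> milp_set T -> milp_set (fun v => S v /\ T v).
Proof.
move=> [k1 [p1 [q1 [A1 [B1 [C1 [b1 hS]]]]]]] [k2 [p2 [q2 [A2 [B2 [C2 [b2 hT]]]]]]].
exists (k1 + k2)%N, (p1 + p2)%N, (q1 + q2)%N, (col_mx A1 A2), (block_mx B1 0 0 B2),
  (block_mx C1 0 0 C2), (col_mx b1 b2) => v.
have E w1 w2 (z1 : 'cV_q1) (z2 : 'cV_q2) :
    col_mx A1 A2 *m v + block_mx B1 0 0 B2 *m col_mx w1 w2
      + block_mx C1 0 0 C2 *m intvec R (col_mx z1 z2)
    = col_mx (A1 *m v + B1 *m w1 + C1 *m intvec R z1)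
             (A2 *m v + B2 *m w2 + C2 *m intvec R z2).
  by rewrite /intvec map_col_mx mul_col_mx !mul_block_col !mul0mx !addr0 !add0r !add_col_mx.
split=> [[/hS [w1 [z1 h1]] /hT [w2 [z2 h2]]] | [w [z]]].
  by exists (col_mx w1 w2), (col_mx z1 z2); rewrite E; apply/mxle_col.
rewrite -(vsubmxK w) -(vsubmxK z) E => /mxle_col [h1 h2].
by split; [apply/hS | apply/hT]; do 2 eexists.
Qed.

Lemma milp_set_eq n (phi psi : 'cV[R]_n -> R) :
  affine_fun phi -> affine_fun psi -> milp_set (fun v => phi v = psi v).
Proof.
move=> hphi hpsi; apply: milp_set_ext (milp_setI (milp_set_le hphi hpsi) (milp_set_le hpsi hphi)) _.
by move=> v; split=> [[h1 h2] | ->//]; apply/eqP; rewrite eq_le h1 h2.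
Qed.

Lemma milp_set_if n (b : bool) (S T : 'cV[R]_n -> Prop) :
  milp_set S -> milp_set T -> milp_set (fun v => if b then S v else T v).
Proof. by case: b. Qed.

Lemma milp_set_implies n (b : bool) (S : 'cV[R]_n -> Prop) :
  milp_set S -> milp_set (fun v => b -> S v).
Proof.
move=> hS; apply: milp_set_ext (milp_set_if b hS (milp_setT n)) _.
by case: b => v; split=> // h; apply: h.
Qed.

Lemma milp_set_bigcap n (I : finType) (S : I -> 'cV[R]_n -> Prop) :
  (forall i, milp_set (S i)) -> milp_set (fun v => forall i, S i v).
Proof.
move=> hS; suff /(_ (enum I)) : forall s : seq I, milp_set (fun v => forall i, i \in s -> S i v).
  by move/milp_set_ext; apply=> v; split=> h i => [|_]; apply: h; rewrite ?mem_enum.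
elim=> [|i s IH]; first by apply: milp_set_ext (milp_setT n) _.
apply: milp_set_ext (milp_setI (hS i) IH) _ => v; split=> [[hi hs] j | h].
  by rewrite inE => /predU1P [-> | /hs].
by split=> [|j js]; apply: h; rewrite inE ?eqxx ?js ?orbT.
Qed.

Lemma milp_set_mxle n m (F G : 'cV[R]_n -> 'cV[R]_m) :
  affine F -> affine G -> milp_set (fun v => mxle (F v) (G v)).
Proof.
move=> hF hG; apply: milp_set_ext (milp_set_bigcap (fun i =>
  milp_set_le (affine_entry i hF) (affine_entry i hG))) _.
by move=> v; split=> h i => [j|]; rewrite ?ord1; apply: h.
Qed.

Lemma milp_set_eqmx n m (F G : 'cV[R]_n -> 'cV[R]_m) :
  affine F -> affine G -> milp_set (fun v => F v = G v).
Proof.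
move=> hF hG; apply: milp_set_ext (milp_set_bigcap (fun i =>
  milp_set_eq (affine_entry i hF) (affine_entry i hG))) _.
by move=> v; split=> [h | -> //]; apply/matrixP => i j; rewrite ord1.
Qed.

Lemma milp_set_preim n m (S : 'cV[R]_m -> Prop) (F : 'cV[R]_n -> 'cV[R]_m) :
  milp_set S -> affine F -> milp_set (fun v => S (F v)).
Proof.
move=> [k [p [q [A [B [C [b hS]]]]]]] [M [c hF]].
exists k, p, q, (A *m M), B, C, (b - A *m c) => v.
have E w z : A *m (M *m v + c) + B *m w + C *m intvec R z
    = A *m M *m v + B *m w + C *m intvec R z + A *m c.
  rewrite mulmxDr mulmxA -!addrA; congr (_ + _).
  by rewrite addrC addrA.
rewrite hS hF; split=> -[w [z h]]; exists w, z.
  by rewrite mxleBrDr -E.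
by rewrite E -mxleBrDr.
Qed.

Lemma milp_set_proj n m (S : 'cV[R]_(n + m) -> Prop) :
  milp_set S -> milp_set (fun v => exists y, S (col_mx v y)).
Proof.
move=> [k [p [q [A [B [C [b hS]]]]]]].
exists k, (m + p)%N, q, (lsubmx A), (row_mx (rsubmx A) B), C, b => v.
have E y w : A *m col_mx v y + B *m w = lsubmx A *m v + row_mx (rsubmx A) B *m col_mx y w.
  by rewrite -{1}(hsubmxK A) !mul_row_col addrA.
split=> [[y /hS [w [z h]]] | [yw [z]]].
  by exists (col_mx y w), z; rewrite -E.
by rewrite -(vsubmxK yw) -E => h; exists (usubmx yw); apply/hS; exists (dsubmx yw), z.
Qed.

Lemma intvec0 n : intvec R (0 : 'cV_n) = 0.
Proof. by apply/matrixP => i j; rewrite !mxE. Qed.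

Lemma milp_set_int n : milp_set (fun v : 'cV[R]_n => exists z, v = intvec R z).
Proof.
exists (n + n)%N, 0%N, n, (col_mx 1%:M (- 1%:M)), 0, (col_mx (- 1%:M) 1%:M), 0 => v.
have E w z : col_mx 1%:M (- 1%:M) *m v + 0 *m w + col_mx (- 1%:M) 1%:M *m intvec R z
    = col_mx (v - intvec R z) (- (v - intvec R z)) :> 'cV_(n + n).
  by rewrite !mul_col_mx !mulNmx !mul1mx mul0mx addr0 add_col_mx opprB [- v + _]addrC.
split=> [[z hz] | [w [z]]]; first by exists 0, z; rewrite E hz subrr oppr0 col_mx0.
rewrite E -col_mx0 => /mxle_col [h1 h2]; exists z; apply/matrixP => i j.
by have := h1 i j; have := h2 i j; rewrite !mxE; lra.
Qed.

Lemma milp_cube n (c : R) : milp_set (cube c : 'cV[R]_n -> Prop).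
Proof.
have hle s (i : 'I_n) : affine_fun (fun v : 'cV[R]_n => s * v i 0).
  exact/affine_funZ/affine_entry/affine_id.
apply: milp_set_ext (milp_set_bigcap (fun i => milp_setI
  (milp_set_le (hle 1 i) (affine_fun_cst n c))
  (milp_set_le (hle (-1) i) (affine_fun_cst n c)))) _.
move=> v; split=> h i; move: (h i); rewrite ler_norml mul1r mulN1r lerNl.
  by move=> [-> ->].
by move=> /andP [-> ->].
Qed.

Lemma cube_col m1 m2 (c : R) (a : 'cV[R]_m1) (b : 'cV[R]_m2) :
  cube c (col_mx a b) <-> cube c a /\ cube c b.
Proof.
split=> [h | [ha hb] i]; last by case: (split_ordP i) => j ->; rewrite ?col_mxEu ?col_mxEd.
by split=> i; [have := h (lshift m2 i) | have := h (rshift m1 i)]; rewrite ?col_mxEu ?col_mxEd.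
Qed.

Lemma cube_le n (c c' : R) (v : 'cV[R]_n) : c <= c' -> cube c v -> cube c' v.
Proof. by move=> cc' hv i; apply: le_trans (hv i) cc'. Qed.

Lemma cube_mul_bound n m (c : R) (A : 'M[R]_(m, n)) v i :
  cube c v -> (A *m v) i 0 <= \sum_j `|A i j| * `|c|.
Proof.
move=> hv; rewrite mxE; apply: ler_sum => j _.
apply: le_trans (ler_norm _) _; rewrite normrM ler_wpM2l //.
exact: le_trans (hv j) (ler_norm c).
Qed.

Lemma milp_set_switch n (S : 'cV[R]_n -> Prop) (c : R) : milp_set S ->
  exists2 S' : 'cV[R]_(n + 1) -> Prop, milp_set S' &
    (forall v, S' (col_mx v 0) <-> S v) /\ (forall v, cube c v -> S' (col_mx v 1%:M)).
Proof.
move=> [k [p [q [A [B [C [b hS]]]]]]].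
(* The last coordinate t relaxes every row by t * M, and M bounds every row *)
(* on the cube when w = 0 and z = 0. *)
pose M := \sum_i (\sum_j `|A i j| * `|c| + `|b i 0|).
pose A' := row_mx A (const_mx (- M)) : 'M_(k, n + 1).
exists (fun y => exists w z, mxle (A' *m y + B *m w + C *m intvec R z) b).
  by exists k, p, q, A', B, C, b.
have E v (t : 'cV_1) : A' *m col_mx v t = A *m v + t 0 0 *: const_mx (- M).
  rewrite mul_row_col; congr (_ + _); apply/matrixP => i j.
  by rewrite !ord1 !mxE big_ord1 mxE mulrC.
split=> v.
  by rewrite hS; split=> -[w [z h]]; exists w, z; move: h; rewrite E mxE scale0r addr0.
move=> hv; exists 0, 0; rewrite E intvec0 mxE eqxx mulr1n scale1r !mulmx0 !addr0 => i o.
have hM : \sum_j `|A i j| * `|c| + `|b i 0| <= M.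
  rewrite /M (bigD1 i) //= lerDl; apply: sumr_ge0 => l _.
  by rewrite addr_ge0 ?sumr_ge0 // => j _; rewrite mulr_ge0.
have := cube_mul_bound A i hv; have := lerNnormlW (lexx `|b i 0|).
by rewrite ord1 !mxE; lra.
Qed.

Lemma int01_cases (z : int) : (0 : R) <= z%:~R -> z%:~R <= 1 :> R -> z = 0 \/ z = 1.
Proof. rewrite ler0z lerz1; lia. Qed.

Lemma milp_set_cubeU n (c : R) (S T : 'cV[R]_n -> Prop) :
  milp_set S -> milp_set T -> milp_set (fun v => cube c v /\ (S v \/ T v)).
Proof.
move=> /(milp_set_switch c) [S' mS' [S'0 S'1]] /(milp_set_switch c) [T' mT' [T'0 T'1]].
have delta_entry : affine_fun (fun y : 'cV[R]_(n + 1) => dsubmx y 0 0).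
  exact/affine_entry/affine_dsub/affine_id.
have flip : affine (fun y : 'cV[R]_(n + 1) => col_mx (usubmx y) (1%:M - dsubmx y)).
  apply: affine_col; first exact/affine_usub/affine_id.
  exact/affineD/affineN/affine_dsub/affine_id/affine_cst.
(* An integer delta in {0, 1} switches off the system of S or that of T. *)
have mW := milp_setI (milp_set_preim (milp_cube _ c) (affine_usub (affine_id _)))
  (milp_setI (milp_set_preim (milp_set_int 1) (affine_dsub (affine_id _)))
  (milp_setI (milp_set_le (affine_fun_cst _ 0) delta_entry)
  (milp_setI (milp_set_le delta_entry (affine_fun_cst _ 1))
  (milp_setI mS' (milp_set_preim mT' flip))))).
have one_int : (1%:M : 'cV[R]_1) = intvec R 1%:M.
  by apply/matrixP => i j; rewrite !ord1 !mxE.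
apply: milp_set_ext (milp_set_proj mW) _ => v /=; split.
  move=> [d]; rewrite col_mxKu col_mxKd => -[cv [[z ->] [d0 [d1 [hS hT]]]]].
  split=> //; move: d0 d1; rewrite mxE => d0 d1.
  have [z0 | z1] := int01_cases d0 d1.
    have z_0 : intvec R z = 0 by apply/matrixP => i j; rewrite !ord1 !mxE z0.
    by left; apply/S'0; rewrite -z_0.
  have z_1 : intvec R z = 1%:M.
    by rewrite one_int; congr intvec; apply/matrixP => i j; rewrite !ord1 z1 mxE.
  by right; apply/T'0; rewrite z_1 subrr in hT.
move=> [cv [hS | hT]].
  exists 0; rewrite col_mxKu col_mxKd subr0 mxE; do !split => //.
  - by exists 0; rewrite intvec0.
  - exact/S'0.
  - exact: T'1.
exists 1%:M; rewrite col_mxKu col_mxKd subrr mxE eqxx mulr1n; do !split => //.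
- by exists 1%:M.
- exact: S'1.
- exact/T'0.
Qed.

Lemma milp_set_bigcup_cube n (I : finType) (c : R) (S : I -> 'cV[R]_n -> Prop) :
  (forall i, milp_set (S i)) -> milp_set (fun v => cube c v /\ exists i, S i v).
Proof.
move=> hS; suff /(_ (enum I)) : forall s : seq I,
    milp_set (fun v => cube c v /\ exists2 i, i \in s & S i v).
  by move/milp_set_ext; apply=> v; split=> -[cv [i]]; split=> //; exists i; rewrite ?mem_enum.
elim=> [|i s IH].
  apply: milp_set_ext (milp_set_le (affine_fun_cst n 1) (affine_fun_cst n 0)) _.
  by move=> v; split=> [|[_ []]//]; rewrite ler10.
apply: milp_set_ext (milp_set_cubeU c (hS i) IH) _ => v; split=> -[cv h]; split=> //.
  case: h => [hi | [_ [j js hj]]]; first by exists i; rewrite ?mem_head.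
  by exists j; rewrite // inE js orbT.
case: h => j; rewrite inE => /predU1P [-> | js] hj; [left | right] => //.
by split=> //; exists j.
Qed.

End MilpCalculus.

Section LinearInequalities.
Variable R : realFieldType.

Lemma row_eq0_nonpos n (c : 'rV[R]_n) : (forall d : 'cV_n, (c *m d) 0 0 <= 0) -> c = 0.
Proof.
move=> hc; have : (c *m c^T) 0 0 <= 0 := hc c^T.
rewrite mxE => hsum; apply/rowP => j; apply/eqP; rewrite mxE -sqrf_eq0.
have sq_ge0 (l : 'I_n) : 0 <= c 0 l * c^T l 0 by rewrite mxE -expr2 sqr_ge0.
have /(psumr_eq0P (fun l _ => sq_ge0 l)) /(_ j isT) : \sum_l c 0 l * c^T l 0 = 0.
  by apply/eqP; rewrite eq_le hsum sumr_ge0.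
by rewrite mxE -expr2 => ->.
Qed.

Definition shear n (a0 : 'rV[R]_n) (d0 : 'cV[R]_n) (b : 'rV[R]_n) :=
  b - ((b *m d0) 0 0 / (a0 *m d0) 0 0) *: a0.

Lemma shear_mul n (a0 b : 'rV[R]_n) (d0 d : 'cV[R]_n) :
  (shear a0 d0 b *m d) 0 0 = (b *m (d - ((a0 *m d) 0 0 / (a0 *m d0) 0 0) *: d0)) 0 0.
Proof. by rewrite mulmxBl mulmxBr -scalemxAl -scalemxAr !mxE; ring. Qed.

Lemma shear_orthogonal n (a0 : 'rV[R]_n) (d0 d : 'cV[R]_n) : (a0 *m d0) 0 0 != 0 ->
  (a0 *m (d - ((a0 *m d) 0 0 / (a0 *m d0) 0 0) *: d0)) 0 0 = 0.
Proof. by move=> nz; rewrite mulmxBr -scalemxAr mxBE mxZE divfK ?subrr. Qed.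

Lemma unshear_sum (I : finType) n (i0 : I) (a : I -> 'rV[R]_n) (c : 'rV[R]_n) (d0 : 'cV[R]_n)
    (l : I -> R) :
  shear (a i0) d0 c = \sum_i l i *: shear (a i0) d0 (a i) ->
  let mu := ((c *m d0) 0 0 - \sum_i l i * (a i *m d0) 0 0) / (a i0 *m d0) 0 0 in
  c = \sum_i (l i + (i == i0)%:R * mu) *: a i.
Proof.
move=> hl mu; have -> : c = shear (a i0) d0 c + ((c *m d0) 0 0 / (a i0 *m d0) 0 0) *: a i0.
  by rewrite subrK.
rewrite hl; under eq_bigr => i _ do rewrite /shear scalerBr scalerA.
under [RHS]eq_bigr => i _ do rewrite scalerDl.
rewrite sumrB big_split /= -addrA; congr (_ + _).
rewrite [RHS](bigD1 i0) //= eqxx mul1r [X in _ = _ + X]big1 ?addr0; last first.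
  by move=> i ne; rewrite (negbTE ne) mul0r scale0r.
rewrite -scaler_suml -scaleNr -scalerDl /mu mulrBl mulr_suml addrC.
by congr ((_ - _) *: _); apply: eq_bigr => i _; rewrite mulrA.
Qed.

Theorem farkas (I : finType) n (P : pred I) (a : I -> 'rV[R]_n) (c : 'rV[R]_n) :
  (forall d : 'cV_n, (forall i, P i -> (a i *m d) 0 0 <= 0) -> (c *m d) 0 0 <= 0) ->
  exists l : I -> R,
    [/\ forall i, 0 <= l i, forall i, ~~ P i -> l i = 0 & c = \sum_i l i *: a i].
Proof.
move Hm : #|P| => m; elim: m P Hm a c => [|m IH] P Hm a c hc.
  exists (fun=> 0); split=> //; rewrite big1 => [|i _]; last by rewrite scale0r.
  apply: row_eq0_nonpos => d; apply: hc => i Pi.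
  by move/card0_eq: Hm => /(_ i); rewrite /in_mem /= Pi.
have [i0 Pi0] : exists i0, P i0.
  by case: (pickP P) => [i Pi | P0]; [exists i | move: Hm; rewrite (eq_card0 P0)].
pose P' := [pred i | (i != i0) && P i].
have HP' : #|P'| = m.
  by move: Hm; rewrite (cardD1 i0) /in_mem /= Pi0 add1n => -[<-]; apply: eq_card => i; rewrite !inE.
have notP' i : ~~ P i -> ~~ P' i by move=> Pi; rewrite /P' /= (negbTE Pi) andbF.
have [hc'|hc'] := classic (forall d : 'cV_n,
    (forall i, P' i -> (a i *m d) 0 0 <= 0) -> (c *m d) 0 0 <= 0).
  have [l [l0 lP ->]] := IH P' HP' a c hc'.
  by exists l; split=> // i /notP'; apply: lP.
have [d0 [hd0 cd0]] : exists d0 : 'cV_n,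
    (forall i, P' i -> (a i *m d0) 0 0 <= 0) /\ 0 < (c *m d0) 0 0.
  apply: NNPP => hn; apply: hc' => d hd; rewrite leNgt; apply/negP => cd.
  by apply: hn; exists d.
have al_gt0 : 0 < (a i0 *m d0) 0 0.
  rewrite ltNge; apply/negP => al_le0; move: cd0; rewrite ltNge => /negP; apply.
  by apply: hc => i Pi; case: (eqVneq i i0) => [-> // | ne]; apply: hd0; rewrite inE ne Pi.
(* Shearing along d0 removes the constraint i0. *)
have hyp' (d : 'cV_n) : (forall i, P' i -> (shear (a i0) d0 (a i) *m d) 0 0 <= 0) ->
    (shear (a i0) d0 c *m d) 0 0 <= 0.
  move=> hd; rewrite shear_mul; apply: hc => i Pi.
  case: (eqVneq i i0) => [-> | ne]; first by rewrite shear_orthogonal ?gt_eqF.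
  by rewrite -shear_mul; apply: hd; rewrite inE ne Pi.
have [l [l0 lP hl]] := IH P' HP' (fun i => shear (a i0) d0 (a i)) (shear (a i0) d0 c) hyp'.
pose mu := ((c *m d0) 0 0 - \sum_i l i * (a i *m d0) 0 0) / (a i0 *m d0) 0 0.
have mu_ge0 : 0 <= mu.
  apply: divr_ge0 (ltW al_gt0); rewrite subr_ge0; apply: le_trans (ltW cd0).
  apply: sumr_le0 => i _; case P'i : (P' i); last by rewrite lP ?P'i // mul0r.
  by rewrite mulr_ge0_le0 // hd0 ?P'i.
exists (fun i => l i + (i == i0)%:R * mu); split; last exact: unshear_sum hl.
  by move=> i; apply: addr_ge0 (l0 i) (mulr_ge0 (ler0n _ _) mu_ge0).
move=> i Pi; have ne : i != i0 by apply: contraNneq Pi => ->.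
by rewrite (negbTE ne) mul0r addr0 lP ?notP'.
Qed.

Lemma small_steps (I : finType) (P : pred I) (al be : I -> R) :
  (forall i, P i -> 0 < be i) ->
  exists2 e, 0 < e & forall e', 0 <= e' <= e -> forall i, P i -> e' * al i <= be i.
Proof.
move=> hbe; pose e := \big[Num.min/1]_(i | P i) (be i / (`|al i| + 1)).
have pos i : 0 < `|al i| + 1 by rewrite ltr_wpDl.
exists e; first by apply: lt_bigmin => // i Pi; rewrite divr_gt0 ?hbe.
move=> e' /andP [e'0 e'e] i Pi; apply: le_trans (_ : e' * (`|al i| + 1) <= _).
  by rewrite ler_wpM2l // (le_trans (ler_norm _)) // lerDl.
rewrite -ler_pdivlMr //; apply: le_trans e'e _.
exact: bigmin_le_cond.
Qed.

End LinearInequalities.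

Section ConcaveProgram.
Variables (R : realType) (n : nat) (Q : 'M[R]_n) (a : 'rV[R]_n).
Variables (K : nat) (Js : 'I_K -> nat).
Variables (r : forall i, 'I_(Js i).+1 -> 'rV[R]_n) (c : forall i, 'I_(Js i).+1 -> R).
Variables (kU : nat) (MU : 'M[R]_(kU, n)) (bU : 'cV[R]_kU).
Arguments r : clear implicits.
Arguments c : clear implicits.

Local Notation piece_index := {i : 'I_K & 'I_(Js i).+1}.

Definition piece (i : 'I_K) (j : 'I_(Js i).+1) (u : 'cV[R]_n) := (r i j *m u) 0 0 + c i j.
Arguments piece : clear implicits.

Definition minpiece (i : 'I_K) u := \big[Num.min/piece i ord0 u]_(j < (Js i).+1) piece i j u.

Definition objective u :=
  - (u^T *m Q *m u) 0 0 + (a *m u) 0 0 + \sum_(i < K) minpiece i u.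

Definition gradient u := a - u^T *m (Q + Q^T).

Definition kkt u (SA : {set 'I_kU}) (SJ : {set piece_index})
    (lam : 'I_kU -> R) (mu : piece_index -> R) :=
  [/\ forall k, if k \in SA then 0 <= lam k /\ (MU *m u) k 0 = bU k 0 else lam k = 0,
      forall s, if s \in SJ
                then 0 <= mu s /\ forall j, piece (tag s) (tagged s) u <= piece (tag s) j u
                else mu s = 0,
      forall i, \sum_(s | tag s == i) mu s = 1 &
      gradient u + \sum_s mu s *: r (tag s) (tagged s) = \sum_k lam k *: row k MU].

Lemma stationarityE (g : 'rV[R]_n) (lam : 'I_kU -> R) (mu : piece_index -> R) :
  g + \sum_s mu s *: r (tag s) (tagged s) = \sum_k lam k *: row k MU <->
  forall l, g 0 l + \sum_s mu s * r (tag s) (tagged s) 0 l = \sum_k lam k * MU k l.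
Proof.
have E1 l : (g + \sum_s mu s *: r (tag s) (tagged s)) 0 l
    = g 0 l + \sum_s mu s * r (tag s) (tagged s) 0 l.
  by rewrite mxDE summxE; under eq_bigr => s _ do rewrite mxZE.
have E2 l : (\sum_k lam k *: row k MU) 0 l = \sum_k lam k * MU k l.
  by rewrite summxE; under eq_bigr => k _ do rewrite mxZE mxE.
split=> [hg l | hg]; first by rewrite -E1 -E2 hg.
by apply/rowP => l; rewrite E1 E2 hg.
Qed.

Lemma quadratic_step u d e :
  - ((u + e *: d)^T *m Q *m (u + e *: d)) 0 0 + (a *m (u + e *: d)) 0 0
  = - (u^T *m Q *m u) 0 0 + (a *m u) 0 0 + e * (gradient u *m d) 0 0
    - e ^+ 2 * (d^T *m Q *m d) 0 0.
Proof.
have tr11 (M : 'M[R]_1) : M^T 0 0 = M 0 0 by rewrite mxE.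
have dQu : (d^T *m Q *m u) 0 0 = (u^T *m Q^T *m d) 0 0.
  by rewrite -tr11 !trmx_mul trmxK mulmxA.
have -> : (u + e *: d)^T = u^T + e *: d^T by rewrite linearD linearZ.
rewrite /gradient !(mulmxDl, mulmxDr, mulmxBl, mulmxBr, mulNmx) -!scalemxAl -!scalemxAr.
by rewrite !(mxDE, mxBE, mxNE, mxZE) dQu; ring.
Qed.

Lemma piece_step i j u d e : piece i j (u + e *: d) = piece i j u + e * (r i j *m d) 0 0.
Proof. by rewrite /piece mulmxDr -scalemxAr mxDE mxZE; ring. Qed.

Lemma minpiece_le i j u : minpiece i u <= piece i j u.
Proof. exact: bigmin_le. Qed.

Lemma minpiece_ge i u x : (forall j, x <= piece i j u) -> x <= minpiece i u.
Proof. by move=> h; apply: le_bigmin => // j _. Qed.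

Lemma kkt_sufficient u SA SJ lam mu u' :
  psd Q -> kkt u SA SJ lam mu -> mxle (MU *m u') bU -> objective u' <= objective u.
Proof.
move=> psdQ [hlam hmu hsum hgrad] hu'; pose d := u' - u.
have -> : u' = u + 1 *: d by rewrite scale1r addrC subrK.
have mu_ge0 s : 0 <= mu s by have := hmu s; case: (s \in SJ) => [[]|->].
have minpiece_u : \sum_s mu s * piece (tag s) (tagged s) u = \sum_i minpiece i u.
  rewrite (partition_big (@tag _ _) xpredT) //=; apply: eq_bigr => i _.
  rewrite -[minpiece _ _]mul1r -(hsum i) mulr_suml; apply: eq_bigr => s /eqP <-.
  have := hmu s; case: (s \in SJ) => [[_ hs] | ->]; last by rewrite !mul0r.
  by congr (_ * _); apply/eqP; rewrite eq_le minpiece_le minpiece_ge.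
have minpiece_u' : \sum_i minpiece i (u + 1 *: d)
    <= \sum_i minpiece i u + \sum_s mu s * (r (tag s) (tagged s) *m d) 0 0.
  apply: le_trans (_ : _ <= \sum_s mu s * piece (tag s) (tagged s) (u + 1 *: d)) _.
    rewrite (partition_big (@tag _ _) xpredT) //=; apply: ler_sum => i _.
    rewrite -[minpiece _ _]mul1r -(hsum i) mulr_suml; apply: ler_sum => s /eqP <-.
    by rewrite ler_wpM2l // minpiece_le.
  rewrite -minpiece_u -big_split; apply: ler_sum => s _.
  by rewrite piece_step mul1r mulrDr.
have stationary : (gradient u *m d) 0 0 + \sum_s mu s * (r (tag s) (tagged s) *m d) 0 0
    = \sum_k lam k * (MU *m d) k 0.
  move/(congr1 (fun g => (g *m d) 0 0)): hgrad.
  rewrite /= mulmxDl !mulmx_suml mxDE !summxE => hgrad.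
  rewrite (eq_bigr (fun s => (mu s *: r (tag s) (tagged s) *m d) 0 0)) => [|s _].
    by rewrite hgrad; apply: eq_bigr => k _; rewrite -scalemxAl mxZE -row_mul mxE.
  by rewrite -scalemxAl mxZE.
have slack : \sum_k lam k * (MU *m d) k 0 <= 0.
  apply: sumr_le0 => k _; have := hlam k.
  case: (k \in SA) => [[l0 act] | ->]; last by rewrite mul0r.
  by rewrite mulr_ge0_le0 // /d mulmxBr mxBE act subr_le0.
have := psdQ d; rewrite /objective quadratic_step expr1n !mul1r.
by move: minpiece_u' stationary slack; lra.
Qed.

Lemma first_order u (d : 'cV[R]_n) (t : 'I_K -> R) :
  mxle (MU *m u) bU ->
  (forall u', mxle (MU *m u') bU -> objective u' <= objective u) ->
  (forall k, (MU *m u) k 0 = bU k 0 -> (MU *m d) k 0 <= 0) ->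
  (forall s : piece_index, piece (tag s) (tagged s) u = minpiece (tag s) u ->
     t (tag s) <= (r (tag s) (tagged s) *m d) 0 0) ->
  (gradient u *m d) 0 0 + \sum_i t i <= 0.
Proof.
(* A positive derivative along d would make a short step along d feasible *)
(* and improving. *)
move=> hu hopt hact hpiece; rewrite leNgt; apply/negP => L_gt0.
set L := _ + _ in L_gt0; pose kappa := (d^T *m Q *m d) 0 0.
have slack_gt0 k : (MU *m u) k 0 != bU k 0 -> 0 < bU k 0 - (MU *m u) k 0.
  by move=> ne; rewrite subr_gt0 lt_neqAle ne hu.
have gap_gt0 (s : piece_index) : piece (tag s) (tagged s) u != minpiece (tag s) u ->
    0 < piece (tag s) (tagged s) u - minpiece (tag s) u.
  by move=> ne; rewrite subr_gt0 lt_neqAle eq_sym ne minpiece_le.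
have [e1 e1_gt0 he1] := small_steps (fun k => (MU *m d) k 0) slack_gt0.
have [e2 e2_gt0 he2] := small_steps (fun s => t (tag s) - (r (tag s) (tagged s) *m d) 0 0) gap_gt0.
have [e3 e3_gt0 he3] := @small_steps _ unit xpredT (fun=> `|kappa|) (fun=> L / 2)
  (fun _ _ => divr_gt0 L_gt0 (ltr0Sn _ 1)).
pose e := Num.min e1 (Num.min e2 e3).
have e_gt0 : 0 < e by rewrite !lt_min e1_gt0 e2_gt0 e3_gt0.
have e_small e' : e' = e1 \/ e' = e2 \/ e' = e3 -> 0 <= e <= e'.
  by rewrite ltW //=; case=> [->|[->|->]]; rewrite !ge_min lexx ?orbT.
have feasible : mxle (MU *m (u + e *: d)) bU.
  move=> k o; rewrite ord1 mulmxDr -scalemxAr mxDE mxZE.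
  have [act | ne] := eqVneq ((MU *m u) k 0) (bU k 0).
    by rewrite act gerDl; apply: mulr_ge0_le0 (ltW e_gt0) (hact k act).
  by have := he1 e (e_small _ (or_introl erefl)) k ne; lra.
have pieces i : minpiece i u + e * t i <= minpiece i (u + e *: d).
  apply: minpiece_ge => j; rewrite piece_step.
  have [att | ne] := eqVneq (piece i j u) (minpiece i u).
    by rewrite -att lerD2l ler_wpM2l ?(ltW e_gt0) //; apply: (hpiece (Tagged _ j)).
  have := he2 e (e_small _ (or_intror (or_introl erefl))) (Tagged _ j) ne.
  rewrite /= mulrBr; lra.
have := hopt _ feasible; rewrite /objective quadratic_step.
have : \sum_i minpiece i u + e * \sum_i t i <= \sum_i minpiece i (u + e *: d).
  by rewrite mulr_sumr -big_split; apply: ler_sum => i _; apply: pieces.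
have := he3 e (e_small _ (or_intror (or_intror erefl))) tt isT.
have := ler_norm kappa; rewrite -/kappa /L in L_gt0 *.
move: L_gt0 e_gt0; nra.
Qed.

Lemma kkt_necessary u :
  mxle (MU *m u) bU ->
  (forall u', mxle (MU *m u') bU -> objective u' <= objective u) ->
  exists SA SJ lam mu, kkt u SA SJ lam mu.
Proof.
move=> hu hopt.
pose SA := [set k | (MU *m u) k 0 == bU k 0].
pose SJ := [set s : piece_index | piece (tag s) (tagged s) u == minpiece (tag s) u].
pose P (x : 'I_kU + piece_index) :=
  match x with inl k => k \in SA | inr s => s \in SJ end.
pose A (x : 'I_kU + piece_index) : 'rV[R]_(n + K) := match x with
  | inl k => row_mx (row k MU) 0
  | inr s => row_mx (- r (tag s) (tagged s)) (delta_mx 0 (tag s)) end.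
pose C : 'rV[R]_(n + K) := row_mx (gradient u) (const_mx 1).
(* In a direction (d; t), t i bounds the derivative of the i-th min-term along d. *)
have /farkas [l [l_ge0 l_supp hl]] : forall dd : 'cV_(n + K),
    (forall x, P x -> (A x *m dd) 0 0 <= 0) -> (C *m dd) 0 0 <= 0.
  move=> dd hdd.
  have split_mul (p : 'rV_n) (q : 'rV_K) : row_mx p q *m dd = p *m usubmx dd + q *m dsubmx dd.
    by rewrite -{1}(vsubmxK dd) mul_row_col.
  rewrite split_mul mxDE.
  have -> : ((const_mx 1 : 'rV_K) *m dsubmx dd) 0 0 = \sum_i dsubmx dd i 0.
    by rewrite mxE; apply: eq_bigr => i _; rewrite mxE mul1r.
  apply: (first_order (d := usubmx dd) (t := fun i => dsubmx dd i 0) hu hopt) => [k act | s att].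
    have := hdd (inl k); rewrite /P /A inE act eqxx split_mul mul0mx addr0.
    by rewrite -row_mul mxE; apply.
  have := hdd (inr s); rewrite /P /A inE att eqxx split_mul mxDE.
  by rewrite mulNmx mxNE -rowE addrC subr_le0 !mxE; apply.
exists SA, SJ, (fun k => l (inl k)), (fun s => l (inr s)); split.
- move=> k; case: ifP => kSA; last by apply: (l_supp (inl k)); rewrite /P kSA.
  by split; [apply: l_ge0 | move: kSA; rewrite inE => /eqP].
- move=> s; case: ifP => sSJ; last by apply: (l_supp (inr s)); rewrite /P sSJ.
  split; first exact: l_ge0.
  by move: sSJ; rewrite inE => /eqP -> j; apply: minpiece_le.
- move=> i; move/(congr1 (fun M : 'rV_(n + K) => M 0 (rshift n i))): hl.
  rewrite /C row_mxEr mxE summxE big_sumType /= big1 => [|k _]; last first.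
    by rewrite mxZE row_mxEr mxE mulr0.
  rewrite add0r => ->; rewrite big_mkcond; apply: eq_bigr => s _.
  by rewrite mxZE row_mxEr mxE eq_sym; case: eqP; rewrite ?mulr1 ?mulr0.
move/(congr1 lsubmx): hl; rewrite /C row_mxKl linear_sum big_sumType /= => ->.
under eq_bigr => k _ do rewrite scale_row_mx row_mxKl.
under [X in _ + X + _]eq_bigr => s _ do rewrite scale_row_mx row_mxKl scalerN.
by rewrite sumrN subrK.
Qed.

Theorem maximizer_kkt u :
  psd Q -> mxle (MU *m u) bU ->
  (forall u', mxle (MU *m u') bU -> objective u' <= objective u) <->
  exists SA SJ lam mu, kkt u SA SJ lam mu.
Proof.
move=> psdQ hu; split; first exact: kkt_necessary.
by move=> [SA [SJ [lam [mu hkkt]]]] u' hu'; apply: kkt_sufficient psdQ hkkt hu'.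
Qed.

End ConcaveProgram.

Arguments piece {R n K Js} r c i j u.

Section Stacking.
Variables (R : realType) (nz N : nat).

Definition embed (t : 'I_N.+1) : 'M[R]_(N.+1 * nz, nz) := colsub (mxvec_index t) 1%:M.

Definition stack (s : nat -> 'cV[R]_nz) := \sum_(t < N.+1) embed t *m s t.

Definition slice (t : 'I_N.+1) (V : 'cV[R]_(N.+1 * nz)) : 'cV[R]_nz := rowsub (mxvec_index t) V.

Lemma mxvec_index_eq (t t' : 'I_N.+1) (j j' : 'I_nz) :
  (mxvec_index t j == mxvec_index t' j') = (t == t') && (j == j').
Proof. by rewrite (inj_eq (@cast_ord_inj _ _ _)) (inj_eq enum_rank_inj) xpair_eqE. Qed.

Lemma embed_entry t t' j (v : 'cV[R]_nz) :
  (embed t' *m v) (mxvec_index t j) 0 = if t == t' then v j 0 else 0.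
Proof.
rewrite mxE (bigD1 j) //= big1 => [|j' nj]; last first.
  by rewrite !mxE mxvec_index_eq [j == _]eq_sym (negbTE nj) andbF mul0r.
by rewrite !mxE mxvec_index_eq eqxx andbT; case: eqP => _; rewrite ?mul1r ?mul0r addr0.
Qed.

Lemma slice_stack s t : slice t (stack s) = s t.
Proof.
apply/colP => j; rewrite mxE summxE (bigD1 t) //= embed_entry eqxx big1 ?addr0 // => t' nt.
by rewrite embed_entry eq_sym (negbTE nt).
Qed.

Lemma affine_slice t : affine (slice t).
Proof. exact/affine_rowsub/affine_id. Qed.

End Stacking.

Arguments embed {R nz N}.
Arguments stack {R nz} N s.
Arguments slice {R nz N}.
Arguments affine_slice {R nz N}.

Lemma milp_traj_stack (R : realType) (nx nu nth npi N : nat)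
    (S : (nat -> 'cV[R]_nx) -> (nat -> 'cV[R]_nu) -> (nat -> 'cV[R]_nth) ->
         (nat -> 'cV[R]_npi) -> Prop)
    (T : 'cV[R]_(N.+1 * ((nx + nu) + (nth + npi))) -> Prop) :
  milp_set T ->
  (forall x u th pi,
     S x u th pi <-> T (stack N (fun t => col_mx (col_mx (x t) (u t)) (col_mx (th t) (pi t))))) ->
  milp_traj N S.
Proof.
move=> [k [mw [mz [M [Bw [Bz [b hT]]]]]]] hS.
pose Mt t := M *m embed (inord t : 'I_N.+1).
exists k, mw, mz, (fun t => lsubmx (lsubmx (Mt t))), (fun t => rsubmx (lsubmx (Mt t))),
  (fun t => lsubmx (rsubmx (Mt t))), (fun t => rsubmx (rsubmx (Mt t))), Bw, Bz, b.
move=> x u th pi; rewrite hS hT /stack mulmx_sumr.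
suff -> : \sum_(t < N.+1) M *m (embed t *m col_mx (col_mx (x t) (u t)) (col_mx (th t) (pi t)))
    = \sum_(t < N.+1) (lsubmx (lsubmx (Mt t)) *m x t + rsubmx (lsubmx (Mt t)) *m u t
        + lsubmx (rsubmx (Mt t)) *m th t + rsubmx (rsubmx (Mt t)) *m pi t) by [].
apply: eq_bigr => t _; rewrite mulmxA /Mt inord_val.
rewrite -{1}(hsubmxK (M *m embed t)) -(hsubmxK (lsubmx _)) -(hsubmxK (rsubmx _)).
by rewrite !mul_row_col !row_mxKl !row_mxKr addrA.
Qed.

Section Stage.
Variables (R : realType) (nx nu nth npi : nat).
Local Notation nz := ((nx + nu) + (nth + npi))%N.

Definition xpart (s : 'cV[R]_nz) := usubmx (usubmx s).
Definition upart (s : 'cV[R]_nz) := dsubmx (usubmx s).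
Definition thpart (s : 'cV[R]_nz) := usubmx (dsubmx s).
Definition pipart (s : 'cV[R]_nz) := dsubmx (dsubmx s).

Lemma stage_partsK s : col_mx (col_mx (xpart s) (upart s)) (col_mx (thpart s) (pipart s)) = s.
Proof. by rewrite !vsubmxK. Qed.

Lemma affine_xpart : affine xpart. Proof. exact/affine_usub/affine_usub/affine_id. Qed.
Lemma affine_upart : affine upart. Proof. exact/affine_dsub/affine_usub/affine_id. Qed.
Lemma affine_thpart : affine thpart. Proof. exact/affine_usub/affine_dsub/affine_id. Qed.
Lemma affine_pipart : affine pipart. Proof. exact/affine_dsub/affine_dsub/affine_id. Qed.

End Stage.

Arguments affine_xpart {R nx nu nth npi}.
Arguments affine_upart {R nx nu nth npi}.
Arguments affine_thpart {R nx nu nth npi}.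
Arguments affine_pipart {R nx nu nth npi}.

Section IncentiveModel.
Variables (R : realType) (nx nu nth npi : nat).
Variables (Q : 'M[R]_(nx + nu)) (H : 'M[R]_(nth + npi, nx + nu)) (K : nat) (Js : 'I_K -> nat).
Variables (F : forall i : 'I_K, 'I_(Js i).+1 -> 'rV[R]_((nx + nu) + (nth + npi)))
  (zeta : forall i : 'I_K, 'I_(Js i).+1 -> R).
Variables (A : 'M[R]_nx) (B : 'M[R]_(nx, nu)) (k0 : 'cV[R]_nx).
Arguments F : clear implicits.
Arguments zeta : clear implicits.

Definition utility (x : 'cV[R]_nx) (u : 'cV[R]_nu) (th : 'cV[R]_nth) (pi : 'cV[R]_npi) :=
  - ((col_mx x u)^T *m Q *m col_mx x u) 0 0
  + ((col_mx th pi)^T *m H *m col_mx x u) 0 0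
  + \sum_(i < K)
      (let e := fun j : 'I_(Js i).+1 =>
           (F i j *m col_mx (col_mx x u) (col_mx th pi)) 0 0 + zeta i j in
       \big[Num.min/e ord0]_(j < (Js i).+1) e j).

Definition lift_u : 'M[R]_(nx + nu, nu) := col_mx B 1%:M.
Definition lift_x x : 'cV[R]_(nx + nu) := col_mx (A *m x + k0) 0.
Definition Qred := lift_u^T *m Q *m lift_u.
Definition ared x (p : 'cV[R]_(nth + npi)) : 'rV[R]_nu :=
  p^T *m H *m lift_u - (lift_x x)^T *m (Q + Q^T) *m lift_u.
Definition rred i j : 'rV[R]_nu := F i j *m col_mx lift_u 0.
Definition cred x p i j := (F i j *m col_mx (lift_x x) p) 0 0 + zeta i j.
Arguments rred : clear implicits.
Arguments cred : clear implicits.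
Definition utility_shift x (p : 'cV[R]_(nth + npi)) :=
  (p^T *m H *m lift_x x) 0 0 - ((lift_x x)^T *m Q *m lift_x x) 0 0.

Lemma psd_Qred : psd Q -> psd Qred.
Proof. by move=> psdQ v; rewrite /Qred !mulmxA -trmx_mul -!mulmxA mulmxA; apply: psdQ. Qed.

Lemma utility_reduced x u th pi :
  utility (A *m x + B *m u + k0) u th pi
  = objective Qred (ared x (col_mx th pi)) rred (cred x (col_mx th pi)) u
    + utility_shift x (col_mx th pi).
Proof.
rewrite /utility /objective /utility_shift /ared /Qred.
set p := col_mx th pi; set m := lift_x x.
have -> : col_mx (A *m x + B *m u + k0) u = lift_u *m u + m.
  by rewrite /lift_u /m /lift_x mul_col_mx mul1mx add_col_mx addr0 addrAC addrC.
have tr11 (M : 'M[R]_1) : M^T 0 0 = M 0 0 by rewrite mxE.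
have cross : (u^T *m lift_u^T *m Q *m m) 0 0 = (m^T *m Q^T *m lift_u *m u) 0 0.
  by rewrite -tr11 !trmx_mul !trmxK !mulmxA.
have -> : \sum_(i < K) (let e := fun j : 'I_(Js i).+1 =>
      (F i j *m col_mx (lift_u *m u + m) p) 0 0 + zeta i j in
      \big[Num.min/e ord0]_(j < (Js i).+1) e j)
    = \sum_(i < K) minpiece rred (cred x p) i u.
  apply: eq_bigr => i _ /=; rewrite /minpiece /piece /rred /cred.
  have -> : col_mx (lift_u *m u + m) p = col_mx lift_u 0 *m u + col_mx m p.
    by rewrite [col_mx lift_u 0 *m u]mul_col_mx mul0mx add_col_mx add0r.
  have e_eq j : (F i j *m (col_mx lift_u 0 *m u + col_mx m p)) 0 0 + zeta i j
      = (F i j *m col_mx lift_u 0 *m u) 0 0 + ((F i j *m col_mx m p) 0 0 + zeta i j).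
    by rewrite mulmxDr mulmxA mxDE addrA.
  by rewrite e_eq; apply: eq_bigr => j _; apply: e_eq.
have -> : (lift_u *m u + m)^T = u^T *m lift_u^T + m^T by rewrite -trmx_mul -linearD.
rewrite !(mulmxDl, mulmxDr, mulmxBl, mulNmx) !(mxDE, mxBE, mxNE) !mulmxA cross; ring.
Qed.

Lemma gradient_red_trmx x p u :
  (gradient Qred (ared x p) u)^T
  = lift_u^T *m H^T *m p - lift_u^T *m (Q + Q^T)^T *m lift_x x - (Qred + Qred^T)^T *m u.
Proof. by rewrite /gradient /ared !linearB /= !trmx_mul !trmxK !mulmxA. Qed.

Variables (kU : nat) (MU : 'M[R]_(kU, nu)) (bU : 'cV[R]_kU).
Variables (U : 'cV[R]_nu -> Prop) (f : 'cV[R]_nx -> 'cV[R]_nu -> 'cV[R]_nth -> 'cV[R]_npi -> R)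
  (h : 'cV[R]_nx -> 'cV[R]_nu -> 'cV[R]_nx).
Hypothesis HUe : forall u, U u <-> mxle (MU *m u) bU.
Hypothesis Hfe : forall x u th pi, f x u th pi = utility x u th pi.
Hypothesis Hhe : forall x u, h x u = A *m x + B *m u + k0.
Hypothesis psdQ : psd Q.

Lemma argmax_kkt x th pi u :
  argmax_u U f h x th pi u <->
  mxle (MU *m u) bU /\
  exists SA SJ lam mu,
    kkt Qred (ared x (col_mx th pi)) rred (cred x (col_mx th pi)) MU bU u SA SJ lam mu.
Proof.
have opt_iff u' : f (h x u') u' th pi <= f (h x u) u th pi <->
    objective Qred (ared x (col_mx th pi)) rred (cred x (col_mx th pi)) u'
    <= objective Qred (ared x (col_mx th pi)) rred (cred x (col_mx th pi)) u.
  by rewrite !Hfe !Hhe !utility_reduced lerD2r.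
have kkt_iff := maximizer_kkt (ared x (col_mx th pi)) rred (cred x (col_mx th pi))
  (psd_Qred psdQ) (MU := MU) (bU := bU) (u := u).
rewrite /argmax_u HUe; split=> -[hu hopt]; split=> //.
  by apply/(kkt_iff hu) => u' hu'; apply/opt_iff/hopt/HUe.
by move=> u' /HUe hu'; apply/opt_iff; apply: (kkt_iff hu).2 hopt u' hu'.
Qed.

Local Notation nz := ((nx + nu) + (nth + npi))%N.
Local Notation piece_index := {i : 'I_K & 'I_(Js i).+1}.
Local Notation ns := #|{: piece_index}|.

Lemma affine_lift_x m (G : 'cV[R]_m -> 'cV[R]_nx) : affine G -> affine (fun v => lift_x (G v)).
Proof. by move=> hG; apply/affine_col/affine_cst/affineD/affine_cst/affineMl. Qed.

Lemma affine_piece_red i j :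
  affine_fun (fun s : 'cV[R]_nz => piece rred (cred (xpart s) (dsubmx s)) i j (upart s)).
Proof.
apply: affine_fun_ext (affine_funD (affine_entry 0 (affineMl (rred i j) affine_upart))
  (affine_funD (affine_entry 0 (affineMl (F i j)
     (affine_col (affine_lift_x affine_xpart) (affine_dsub (affine_id _ _)))))
  (affine_fun_cst _ (zeta i j)))) _.
by move=> s.
Qed.
Arguments affine_piece_red : clear implicits.

Lemma affine_gradient_red l :
  affine_fun (fun s : 'cV[R]_nz => gradient Qred (ared (xpart s) (dsubmx s)) (upart s) 0 l).
Proof.
have ap : affine (fun s : 'cV[R]_nz => dsubmx s) := affine_dsub (affine_id _ _).
apply: affine_fun_ext (affine_entry l (affineD (affineD (affineMl (lift_u^T *m H^T) ap)
  (affineN (affineMl (lift_u^T *m (Q + Q^T)^T) (affine_lift_x affine_xpart))))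
  (affineN (affineMl (Qred + Qred^T)^T affine_upart)))) _.
by move=> s /=; rewrite -gradient_red_trmx mxE.
Qed.

Local Notation ny := (nz + (kU + ns))%N.

Definition kkt_lam (y : 'cV[R]_ny) k := usubmx (dsubmx y) k 0.
Definition kkt_mu (y : 'cV[R]_ny) t := dsubmx (dsubmx y) (enum_rank t) 0.

Definition kkt_system SA SJ (y : 'cV[R]_ny) :=
  let s := usubmx y in
  kkt Qred (ared (xpart s) (dsubmx s)) rred (cred (xpart s) (dsubmx s)) MU bU (upart s) SA SJ
    (kkt_lam y) (kkt_mu y).

Lemma milp_kkt_system SA SJ : milp_set (kkt_system SA SJ).
Proof.
have ay : affine (fun y : 'cV[R]_ny => usubmx y) := affine_usub (affine_id _ _).
have alam k : affine_fun (kkt_lam^~ k) by exact/affine_entry/affine_usub/affine_dsub/affine_id.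
have amu t : affine_fun (kkt_mu^~ t) by exact/affine_entry/affine_dsub/affine_dsub/affine_id.
have apiece i j := affine_fun_comp (affine_piece_red i j) ay.
have C1 := milp_set_bigcap (fun k => milp_set_if (k \in SA)
  (milp_setI (milp_set_le (affine_fun_cst _ 0) (alam k))
     (milp_set_eq (affine_entry k (affineMl MU (affine_comp affine_upart ay)))
        (affine_fun_cst _ (bU k 0))))
  (milp_set_eq (alam k) (affine_fun_cst _ 0))).
have C2 := milp_set_bigcap (fun t : piece_index => milp_set_if (t \in SJ)
  (milp_setI (milp_set_le (affine_fun_cst _ 0) (amu t))
     (milp_set_bigcap (fun j => milp_set_le (apiece (tag t) (tagged t)) (apiece (tag t) j))))
  (milp_set_eq (amu t) (affine_fun_cst _ 0))).
have C3 := milp_set_bigcap (fun i => milp_set_eq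
  (affine_fun_sum (index_enum _) (fun t : piece_index => tag t == i) amu)
  (affine_fun_cst _ 1)).
have C4 := milp_set_bigcap (fun l : 'I_nu => milp_set_eq
  (affine_funD (affine_fun_comp (affine_gradient_red l) ay) (affine_fun_sum (index_enum _) xpredT
     (fun t => affine_fun_ext (affine_funZ (rred (tag t) (tagged t) 0 l) (amu t))
        (fun y => mulrC _ _))))
  (affine_fun_sum (index_enum _) xpredT
     (fun k => affine_fun_ext (affine_funZ (MU k l) (alam k)) (fun y => mulrC _ _)))).
apply: milp_set_ext (milp_setI C1 (milp_setI C2 (milp_setI C3 C4))) _ => y.
by split=> [[h1 [h2 [h3 /stationarityE h4]]] | [h1 h2 h3 /stationarityE h4]].
Qed.

Lemma milp_cube_argmax c : milp_set (fun s : 'cV[R]_nz =>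
  cube c s /\ argmax_u U f h (xpart s) (thpart s) (pipart s) (upart s)).
Proof.
pose pattern := ({set 'I_kU} * {set piece_index})%type.
have mK := milp_set_bigcup_cube c (fun p : pattern => milp_set_proj (milp_kkt_system p.1 p.2)).
have mU : milp_set (fun s : 'cV[R]_nz => mxle (MU *m upart s) bU).
  exact: milp_set_mxle (affineMl MU affine_upart) (affine_cst _ bU).
apply: milp_set_ext (milp_setI mU mK) _ => s; rewrite argmax_kkt vsubmxK.
split=> [[hu [cs [[SA SJ] [lm hk]]]] | [cs [hu [SA [SJ [lam [mu hk]]]]]]].
  do 2 split=> //; exists SA, SJ, (fun k => usubmx lm k 0), (fun t => dsubmx lm (enum_rank t) 0).
  by move: hk; rewrite /kkt_system /kkt_lam /kkt_mu /= col_mxKu col_mxKd.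
do 2 split=> //; exists (SA, SJ), (col_mx (\col_k lam k) (\col_i mu (enum_val i))).
rewrite /kkt_system /kkt_lam /kkt_mu /= col_mxKu col_mxKd col_mxKu col_mxKd.
have -> : (fun k => (\col_k0 lam k0) k 0) = lam.
  by apply: functional_extensionality => k; rewrite mxE.
have -> : (fun t => (\col_i mu (enum_val i)) (enum_rank t) 0) = mu.
  by apply: functional_extensionality => t; rewrite mxE enum_rankK.
exact: hk.
Qed.

Variables (X : 'cV[R]_nx -> Prop) (Th : 'cV[R]_nth -> Prop) (Pi : 'cV[R]_npi -> Prop).
Hypotheses (HX : polyhedron X) (HTh : polyhedron Th) (HPi : milp_set Pi).
Hypotheses (HXb : bounded_set X) (HUb : bounded_set U) (HThb : bounded_set Th)
  (HPib : bounded_set Pi).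
Variables (g : 'cV[R]_nx -> 'cV[R]_nu -> 'cV[R]_nth -> 'cV[R]_npi -> 'cV[R]_nth)
  (P : nat) (mB : 'I_P -> nat) (Bp : forall i, 'M[R]_(mB i, nz)) (psi : forall i, 'cV[R]_(mB i))
  (G : 'I_P -> 'M[R]_(nth, nz)) (chi : 'I_P -> 'cV[R]_nth).
Hypothesis Hg1 : forall i x u th pi,
  mxle (Bp i *m col_mx (col_mx x u) (col_mx th pi)) (psi i) ->
  g x u th pi = G i *m col_mx (col_mx x u) (col_mx th pi) + chi i.
Hypothesis Hg3 : forall x u th pi, X x -> U u -> Th th -> Pi pi ->
  exists i, mxle (Bp i *m col_mx (col_mx x u) (col_mx th pi)) (psi i).

Definition stage_dom (s : 'cV[R]_nz) :=
  X (xpart s) /\ U (upart s) /\ Th (thpart s) /\ Pi (pipart s).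

Definition stage_ok (s : 'cV[R]_nz) :=
  [/\ argmax_u U f h (xpart s) (thpart s) (pipart s) (upart s),
      X (xpart s), Th (thpart s) & Pi (pipart s)].

Definition step_ok (y : 'cV[R]_(nz + nz)) :=
  let s := usubmx y in let s' := dsubmx y in
  xpart s' = h (xpart s) (upart s) /\ thpart s' = g (xpart s) (upart s) (thpart s) (pipart s).

Lemma stage_dom_cube : exists c, forall s, stage_dom s -> cube c s.
Proof.
case: HXb HUb HThb HPib => [cX hX] [cU hU] [cT hT] [cP hP].
exists (`|cX| + `|cU| + `|cT| + `|cP|) => s [sX [sU [sT sP]]].
have le_c a : `|a| <= `|cX| + `|cU| + `|cT| + `|cP| ->
    forall m (v : 'cV[R]_m), cube a v -> cube (`|cX| + `|cU| + `|cT| + `|cP|) v.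
  by move=> ha m v; apply: cube_le; apply: le_trans (ler_norm a) ha.
have n0 (a : R) : 0 <= `|a| := normr_ge0 a; rewrite -(stage_partsK s) !cube_col; split; split.
- by apply: le_c (hX _ sX); move: (n0 cU) (n0 cT) (n0 cP); lra.
- by apply: le_c (hU _ sU); move: (n0 cX) (n0 cT) (n0 cP); lra.
- by apply: le_c (hT _ sT); move: (n0 cX) (n0 cU) (n0 cP); lra.
- by apply: le_c (hP _ sP); move: (n0 cX) (n0 cU) (n0 cT); lra.
Qed.

Lemma milp_stage_dom : milp_set stage_dom.
Proof.
apply: milp_setI (milp_set_preim (milp_polyhedron HX) affine_xpart) _.
apply: milp_setI (milp_set_ext (milp_set_mxle (affineMl MU affine_upart) (affine_cst _ bU)) _) _.
  by move=> s; rewrite HUe.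
exact: milp_setI (milp_set_preim (milp_polyhedron HTh) affine_thpart)
  (milp_set_preim HPi affine_pipart).
Qed.

Lemma milp_stage_ok : milp_set stage_ok.
Proof.
have [c hc] := stage_dom_cube.
apply: milp_set_ext (milp_setI milp_stage_dom (milp_cube_argmax c)) _ => s.
split=> [[[sX [_ [sT sP]]] [_ ham]] | [ham sX sT sP]]; first by [].
have ds : stage_dom s by do !split=> //; case: ham.
by split=> //; split=> //; apply: hc.
Qed.

Lemma g_piece i s : mxle (Bp i *m s) (psi i) ->
  g (xpart s) (upart s) (thpart s) (pipart s) = G i *m s + chi i.
Proof. by have := @Hg1 i (xpart s) (upart s) (thpart s) (pipart s); rewrite stage_partsK. Qed.

Lemma g_cover s : stage_dom s -> exists i, mxle (Bp i *m s) (psi i).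
Proof. by move=> [sX [sU [sT sP]]]; have := Hg3 sX sU sT sP; rewrite stage_partsK. Qed.

Lemma milp_step_ok :
  milp_set (fun y : 'cV[R]_(nz + nz) => stage_dom (usubmx y) /\ stage_dom (dsubmx y) /\ step_ok y).
Proof.
have [c hc] := stage_dom_cube.
have ay : affine (fun y : 'cV[R]_(nz + nz) => usubmx y) := affine_usub (affine_id _ _).
have ady : affine (fun y : 'cV[R]_(nz + nz) => dsubmx y) := affine_dsub (affine_id _ _).
have mpiece i := milp_setI (milp_set_mxle (affineMl (Bp i) ay) (affine_cst _ (psi i)))
  (milp_set_eqmx (affine_comp affine_thpart ady)
     (affineD (affineMl (G i) ay) (affine_cst _ (chi i)))).
have mx := milp_set_eqmx (affine_comp affine_xpart ady)
  (affineD (affineD (affineMl A (affine_comp affine_xpart ay))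
     (affineMl B (affine_comp affine_upart ay))) (affine_cst _ k0)).
have mdom2 := milp_setI (milp_set_preim milp_stage_dom ay) (milp_set_preim milp_stage_dom ady).
apply: milp_set_ext (milp_setI mdom2 (milp_setI mx (milp_set_bigcup_cube c mpiece))) _ => y.
rewrite /step_ok Hhe; split=> [[[ds ds'] [hx [_ [i [hB ->]]]]] | [ds [ds' [hx hth]]]].
  by rewrite -g_piece.
split; first by split.
split=> //; split; first by rewrite -(vsubmxK y) cube_col; split; apply: hc.
have [i hi] := g_cover ds; exists i; split=> //.
by rewrite hth (g_piece hi).
Qed.

Definition traj_ok N (V : 'cV[R]_(N.+1 * nz)) :=
  forall t : 'I_N.+1, stage_ok (slice t V) /\
    ((t < N)%N -> let y := col_mx (slice t V) (slice (inord t.+1) V) in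
                  stage_dom (usubmx y) /\ stage_dom (dsubmx y) /\ step_ok y).
Arguments traj_ok : clear implicits.

Lemma milp_traj_ok N : milp_set (traj_ok N).
Proof.
apply: milp_set_bigcap => t; apply: milp_setI.
  exact: milp_set_preim milp_stage_ok (affine_slice t).
exact/milp_set_implies/(milp_set_preim milp_step_ok)/affine_col/affine_slice/affine_slice.
Qed.

Lemma feasible_traj_ok N x u th pi :
  feasible X U Th Pi f h g N x u th pi <->
  traj_ok N (stack N (fun t => col_mx (col_mx (x t) (u t)) (col_mx (th t) (pi t)))).
Proof.
rewrite /traj_ok /stage_ok /step_ok /stage_dom /xpart /upart /thpart /pipart.
split=> [hf t | ht t tN].
  rewrite !slice_stack !(col_mxKu, col_mxKd).
  have [ham hX hT hP hstep] := hf t (ltn_ord t); split=> // tN.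
  have [ham' hX' hT' hP' _] := hf t.+1 tN; rewrite inordK //.
  by case: ham ham' (hstep tN) => hU _ [hU' _] [hx hth]; do !split.
have [+ hstep] := ht (Ordinal (tN : (t < N.+1)%N)).
rewrite !slice_stack !(col_mxKu, col_mxKd) => -[ham hX hT hP]; split=> // tN'.
by have := hstep tN'; rewrite /= !slice_stack inordK // !(col_mxKu, col_mxKd) => -[_ [_ []]].
Qed.

Theorem milp_feasible N : milp_traj N (feasible X U Th Pi f h g N).
Proof. exact: milp_traj_stack (milp_traj_ok N) (feasible_traj_ok N). Qed.

End IncentiveModel.

Theorem proposition1 (R : realType) (nx nu nth npi : nat)
  (X : 'cV[R]_nx -> Prop) (U : 'cV[R]_nu -> Prop)
  (Th : 'cV[R]_nth -> Prop) (Pi : 'cV[R]_npi -> Prop)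
  (f : 'cV[R]_nx -> 'cV[R]_nu -> 'cV[R]_nth -> 'cV[R]_npi -> R)
  (h : 'cV[R]_nx -> 'cV[R]_nu -> 'cV[R]_nx)
  (g : 'cV[R]_nx -> 'cV[R]_nu -> 'cV[R]_nth -> 'cV[R]_npi -> 'cV[R]_nth)
  (pd pc : nat) (D : 'M[R]_(pd, nx)) (C : 'M[R]_(pc, nu))
  (nmx nmu : nat) (tm : 'I_nmx.+1 -> nat) (tau : 'I_nmu.+1 -> nat)
  (* (A1) *)
  (HX : polyhedron X) (HXb : bounded_set X)
  (HU : polyhedron U) (HUb : bounded_set U)
  (HTh : polyhedron Th) (HThb : bounded_set Th)
  (HPi : milp_set Pi) (HPib : bounded_set Pi) (HPic : closed_set Pi)
  (* (A2) *)
  (Hf : f_form f)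
  (Hfx : forall u th pi, U u -> Th th -> Pi pi -> concave_on X (fun x => f x u th pi))
  (Hfu : forall x th pi, X x -> Th th -> Pi pi -> strictly_concave_on U (fun u => f x u th pi))
  (Hfth : forall x u pi, X x -> U u -> Pi pi -> concave_on Th (fun th => f x u th pi))
  (* (A3) *)
  (Hh : h_affine h)
  (Hhs : forall x', X x' -> exists x u, X x /\ U u /\ h x u = x')
  (Hg : g_pwa X U Th Pi g)
  (Hgs : forall th', Th th' -> exists x u th pi, [/\ X x, U u, Th th, Pi pi & g x u th pi = th'])
  (* (A5) *)
  (Hobs : observable X U Th Pi f h g D C tm tau) :
  forall N : nat, milp_traj N (feasible X U Th Pi f h g N).
Proof.
move=> N.
case: HU => kU [MU [bU HUe]].
case: Hf => Q [H [K [Js [F [zeta [psdQ Hfe]]]]]].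
case: Hh => A [B [k0 Hhe]].
case: Hg => P [mB [Bp [psi [G [chi [Hg1 [_ Hg3]]]]]]].
exact (milp_feasible HUe Hfe Hhe psdQ HX HTh HPi HXb HUb HThb HPib Hg1 Hg3 N).
Qed.
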